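(* For any real symmetric $n\times n$ matrix $M$, there exists a basis $\{f_1,\dots,f_n\}$ of $\mathbb R^n$ consisting of eigenfunctions of $M$ each of which has minimal support.
   Context: An eigenfunction is a nonzero eigenvector of $M$. For $f\in\mathbb R^n$, $\mathrm{supp}(f)=\{i\in\{1,\dots,n\}: f(i)\ne0\}$. An eigenfunction $f$ has minimal support if every eigenfunction $g$ for the same eigenvalue as $f$ with $\mathrm{supp}(g)\subseteq\mathrm{supp}(f)$ satisfies $\mathrm{supp}(g)=\mathrm{supp}(f)$. *)

From HB Require Import structures.
From mathcomp Require Import all_boot all_order all_algebra.
From mathcomp Require Import reals.
Set Implicit Arguments. Unset Strict Implicit. Unset Printing Implicit Defensive.
Import Order.TTheory GRing.Theory Num.Theory.
Local Open Scope ring_scope.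

Definition supp (R : nzRingType) (n : nat) (f : 'cV[R]_n) : {set 'I_n} :=
  [set i | f i 0 != 0].

Definition eigenfun (R : nzRingType) (n : nat) (M : 'M[R]_n) (a : R) (f : 'cV[R]_n) : Prop :=
  f != 0 /\ M *m f = a *: f.

Definition min_supp_eigenfun (R : nzRingType) (n : nat) (M : 'M[R]_n) (a : R) (f : 'cV[R]_n) : Prop :=
  eigenfun M a f /\
  forall g : 'cV[R]_n, eigenfun M a g -> supp g \subset supp f -> supp g = supp f.

(** Over the reals a symmetric matrix is diagonalizable, so it suffices to
  span every eigenspace by eigenfunctions of minimal support.  Given an
  eigenfunction x, pick an eigenfunction g of minimal support inside supp x
  and a coordinate i in supp g: then x - (x_i / g_i) g is an eigenfunction
  (or 0) with strictly smaller support, and induction on the size of the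
  support concludes.  A basis is finally extracted from the resulting
  spanning family. *)
From HB Require Import structures.
From mathcomp Require Import all_boot all_order all_algebra.
From mathcomp Require Import boolp reals complex.
Set Implicit Arguments. Unset Strict Implicit. Unset Printing Implicit Defensive.
Import Order.TTheory GRing.Theory Num.Theory.
Local Open Scope ring_scope.

Section SpannedBy.
Variables (F : fieldType) (vT : vectType F) (P : vT -> Prop).

Definition spanned_by (x : vT) :=
  exists2 s : seq vT, {in s, forall y, P y} & x \in <<s>>%VS.

Lemma spanned_by_all (X : seq vT) : {in X, forall x, spanned_by x} ->
  exists2 s : seq vT, {in s, forall y, P y} & (<<X>> <= <<s>>)%VS.
Proof.
elim: X => [|x X IHX] spanX; first by exists [::]; rewrite ?sub0v.
have [s1 Ps1 xs1] := spanX x (mem_head x X).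
have [s2 Ps2 Xs2] : exists2 s, {in s, forall y, P y} & (<<X>> <= <<s>>)%VS.
  by apply: IHX => y yX; apply: spanX; rewrite inE yX orbT.
exists (s1 ++ s2); first by move=> y; rewrite mem_cat => /orP[/Ps1|/Ps2].
by rewrite span_cons span_cat addvS // -memvE.
Qed.

Lemma free_subseq_span (s : seq vT) :
  exists t : seq vT, [/\ {subset t <= s}, free t & <<t>>%VS = <<s>>%VS].
Proof.
elim: s => [|x s [t [ts free_t span_t]]]; first by exists [::]; rewrite nil_free.
have [xt|xNt] := boolP (x \in <<t>>%VS).
  exists t; split=> // [y /ts ys|]; first by rewrite inE ys orbT.
  by rewrite span_cons -span_t; apply/esym/addv_idPr; rewrite -memvE.
exists (x :: t); split; last by rewrite !span_cons span_t.
  by move=> y; rewrite !inE => /orP[->|/ts ->]; rewrite ?orbT.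
by rewrite free_cons xNt.
Qed.

Lemma spanned_by_sum (I : finType) (v : I -> vT) :
  (forall i, spanned_by (v i)) -> spanned_by (\sum_i v i).
Proof.
move=> span_v.
have [|s Ps sub_s] := @spanned_by_all [seq v i | i]; first by move=> _ /mapP[i _ ->].
exists s => //; apply: (subvP sub_s); apply: memv_suml => i _.
by apply/memv_span/map_f; rewrite mem_enum.
Qed.

Lemma spanned_by_basis : (forall x, spanned_by x) ->
  exists2 b : seq vT, basis_of fullv b & {in b, forall y, P y}.
Proof.
move=> spanP.
have [s Ps full_s] := @spanned_by_all (vbasis fullv) (fun x _ => spanP x).
have [t [ts free_t span_t]] := free_subseq_span s.
exists t; last by move=> y /ts /Ps.
rewrite /basis_of free_t andbT eqEsubv subvf span_t.
by rewrite -(span_basis (vbasisP fullv)).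
Qed.

End SpannedBy.

Lemma spanned_byW (F : fieldType) (vT : vectType F) (P Q : vT -> Prop) x :
  (forall y, P y -> Q y) -> spanned_by P x -> spanned_by Q x.
Proof. by move=> PQ [s Ps xs]; exists s => // y /Ps /PQ. Qed.

Section Support.
Variables (F : fieldType) (n : nat).
Implicit Types x g : 'cV[F]_n.

Lemma supp_eq0 x : (supp x == set0) = (x == 0).
Proof.
apply/eqP/eqP => [x0|->]; last by apply/setP => i; rewrite !inE mxE eqxx.
apply/matrixP => i j; rewrite ord1 mxE; apply/eqP.
have : i \notin supp x by rewrite x0 in_set0.
by rewrite inE negbK.
Qed.

Lemma supp_elim_proper x g i : supp g \subset supp x -> i \in supp g ->
  supp (x - (x i 0 / g i 0) *: g) \proper supp x.
Proof.
rewrite inE => gx gi0; apply/properP; split.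
  apply/subsetP => j; rewrite !inE !mxE; apply: contraNN => /eqP xj0.
  have : j \notin supp g by apply: contra (subsetP gx j) _; rewrite inE xj0 eqxx.
  by rewrite inE negbK => /eqP ->; rewrite xj0 mulr0 subrr.
exists i; first by apply: (subsetP gx); rewrite inE.
by rewrite inE !mxE divfK // subrr eqxx.
Qed.

End Support.

Section MinimalSupport.
Variables (F : fieldType) (n : nat) (M : 'M[F]_n) (a : F).

Lemma min_supp_eigenfun_sub (x : 'cV[F]_n) : eigenfun M a x ->
  exists2 g, min_supp_eigenfun M a g & supp g \subset supp x.
Proof.
move=> eig_x.
pose is_eigen_supp S := `[< exists2 g, eigenfun M a g & supp g = S >].
have : is_eigen_supp (supp x) by apply/asboolP; exists x.
case/minset_exists => S /minsetP[/asboolP[g eig_g <-] min_g] gx.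
exists g => //; split=> // h eig_h hg.
by apply: min_g hg; apply/asboolP; exists h.
Qed.

Lemma eigenvector_spanned_by_min_supp (x : 'cV[F]_n) : M *m x = a *: x ->
  spanned_by (min_supp_eigenfun M a) x.
Proof.
have [k] := ubnP #|supp x|; elim: k x => // k IHk x supp_lt Mx.
have [->|x0] := eqVneq x 0; first by exists [::]; rewrite ?mem0v.
have [g min_g gx] := min_supp_eigenfun_sub (conj x0 Mx).
have [[g0 Mg] _] := min_g.
have /set0Pn[i gi] : supp g != set0 by rewrite supp_eq0.
pose y := x - (x i 0 / g i 0) *: g.
have My : M *m y = a *: y.
  by rewrite mulmxBr -scalemxAr Mg Mx scalerBr !scalerA mulrC.
have supp_y_lt : (#|supp y| < k)%N.
  exact: leq_trans (proper_card (supp_elim_proper gx gi)) supp_lt.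
have [s min_s ys] := IHk y supp_y_lt My.
exists (g :: s); first by move=> z; rewrite inE => /orP[/eqP ->|/min_s].
rewrite -[x](subrK (x i 0 / g i 0 *: g)) -/y span_cons addrC.
by rewrite memv_add ?memvZ ?memv_line.
Qed.

End MinimalSupport.

Lemma row_spectralmx_eigenspace (C : numClosedFieldType) n (A : 'M[C]_n) i :
  A \is normalmx -> (row i (spectralmx A) <= eigenspace A (spectral_diag A 0 i))%MS.
Proof.
move=> /orthomx_spectralP; set P := spectralmx A; set d := spectral_diag A.
move=> A_eq; apply/eigenspaceP.
have PA : P *m A = diag_mx d *m P.
  by rewrite {1}A_eq !mulmxA mulmxV ?spectral_unit ?mul1mx.
by rewrite -row_mul PA row_mul row_diag_mx -scalemxAl -rowE.
Qed.

Section RealSymmetric.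
Variables (R : rcfType) (n : nat) (M : 'M[R]_n).
Hypothesis symM : M^T = M.

Lemma symmetric_eigenspaces_full :
  exists r : 'I_n -> R, row_full (\sum_i eigenspace M (r i))%MS.
Proof.
pose A := map_mx (real_complex R) M.
have A_herm : A \is hermsymmx.
  apply: realsym_hermsym.
    by apply/is_hermitianmxP; rewrite expr0 scale1r map_mx_id // map_trmx symM.
  by apply/mxOverP => i j; rewrite mxE complex_real.
pose r i := complex.Re (spectral_diag A 0 i).
have rE i : spectral_diag A 0 i = real_complex R (r i).
  have := mxOverP (hermitian_spectral_diag_real A_herm) 0 i; rewrite /r.
  by case: (spectral_diag A 0 i) => x y; rewrite complex_real => /eqP ->.
have sub_E : (spectralmx A <= map_mx (real_complex R) (\sum_i eigenspace M (r i))%MS)%MS.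
  apply/row_subP => i.
  apply: submx_trans (row_spectralmx_eigenspace i (hermitian_normalmx A_herm)) _.
  by rewrite rE -map_eigenspace map_submx (sumsmx_sup i).
exists r; rewrite /row_full eqn_leq rank_leq_col /=.
by have := mxrankS sub_E; rewrite mxrank_map mxrank_unit ?spectral_unit.
Qed.

Lemma symmetric_eigen_decomposition : exists r : 'I_n -> R,
  forall w : 'cV[R]_n,
    exists2 v : 'I_n -> 'cV[R]_n, w = \sum_i v i & forall i, M *m v i = r i *: v i.
Proof.
have [r /submx_full full_r] := symmetric_eigenspaces_full; exists r => w.
have /sub_sumsmxP[u wE] := full_r _ w^T.
exists (fun i => (u i *m eigenspace M (r i))^T).
  by rewrite -[w]trmxK wE linear_sum.
move=> i; have /eigenspaceP Mv := submxMl (u i) (eigenspace M (r i)).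
by rewrite -{1}symM -trmx_mul Mv linearZ.
Qed.

End RealSymmetric.

Theorem lemma2p2 (R : realType) (n : nat) (M : 'M[R]_n) (hM : M^T = M) :
  exists f : 'I_n -> 'cV[R]_n,
    basis_of fullv [seq f i | i : 'I_n] /\
    forall i, exists a : R, min_supp_eigenfun M a (f i).
Proof.
pose P (v : 'cV[R]_n) := exists a, min_supp_eigenfun M a v.
have [r decomp] := symmetric_eigen_decomposition hM.
have spanP w : spanned_by P w.
  have [v -> Mv] := decomp w; apply: spanned_by_sum => i.
  apply: spanned_byW (eigenvector_spanned_by_min_supp (Mv i)).
  by move=> y min_y; exists (r i).
have [b b_basis Pb] := spanned_by_basis spanP.
have size_b : size b = n.
  by rewrite -(eqnP (basis_free b_basis)) (span_basis b_basis) dimvf /dim /= muln1.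
exists (fun i => b`_i); split => [|i]; last by apply/Pb/mem_nth; rewrite size_b.
suff -> : [seq b`_i | i : 'I_n] = b by [].
by rewrite -[RHS](mkseq_nth 0) /mkseq size_b -val_enum_ord -map_comp.
Qed.
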